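(* Let $\mathrm{G}$ be a finite undirected graph with vertex set $\mathrm{V}(\mathrm{G})$ of size $N$, with no isolated vertices, maximum degree $d_{\max}$ and minimum degree $d_{\min}$. Let $0 \le \lambda \le 1$ and $0 < p < 1$, and let $\mathcal{K}^{\lambda,0}_p(\mathrm{G}) = [\mathrm{K}^{\lambda,0}_p(k,l)]_{k,l\in\mathrm{V}(\mathrm{G})}$. Then, with $\rho = (1-p)\lambda$ and $\Gamma(\mathbf{A}) = \sum_{i=0}^\infty (i+1)\mathbf{A}^i$, the entrywise inequalities $$\Gamma\!\left(\frac{\rho}{d_{\max}}\mathrm{Adj}(\mathrm{G})\right) \le \mathcal{K}^{\lambda,0}_p(\mathrm{G}) \le \Gamma\!\left(\frac{\rho}{d_{\min}}\mathrm{Adj}(\mathrm{G})\right)$$ hold (series with nonnegative entries are interpreted entrywise in $[0,\infty]$).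
   Context: A random walk $\omega(h)$ with stopping probability $p$ starting at $h$ is the sequence $(j_1 = h, j_2, \dots, j_t)$ where, independently at each step, the walk stops with probability $p$ and otherwise moves from its current vertex to a uniformly random neighbour. A prefix sub-walk of $(j_1,\dots,j_t)$ is a walk $(j_1,\dots,j_r)$ with $1\le r\le t$ (or the empty walk); its length is its number of edges $r-1$. The frequency vector $f^{\omega(h),\lambda}_h \in \mathbb{R}^{\mathrm{V}(\mathrm{G})}$ is $f^{\omega(h),\lambda}_h(i) = \sum_{e\in \mathrm{L}^{\omega(h)}(i)} \lambda^e$, where $\mathrm{L}^{\omega(h)}(i)$ is the multiset of lengths of the prefix sub-walks of $\omega(h)$ that end at $i$. For independent random walks $\omega(k),\omega(l)$ with stopping probability $p$ started at $k$ and $l$, the kernel (with $\alpha = 0$) is $\mathrm{K}^{\lambda,0}_p(k,l) = \mathbb{E}_{\omega(k)}[f^{\omega(k),\lambda}_k]\,\big(\mathbb{E}_{\omega(l)}[f^{\omega(l),\lambda}_l]\big)^\top$. $\mathrm{Adj}(\mathrm{G})$ is the adjacency matrix. *)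

From HB Require Import structures.
From mathcomp Require Import all_boot all_order all_algebra.
From mathcomp Require Import all_classical all_reals all_analysis.
Set Implicit Arguments. Unset Strict Implicit. Unset Printing Implicit Defensive.
Import Order.TTheory GRing.Theory Num.Theory.
Local Open Scope ring_scope.

(* A finite simple undirected graph on vertex set 'I_n is a symmetric,
   irreflexive relation e. *)
Section Graph.
Variables (n : nat) (e : rel 'I_n).

Definition vdeg (v : 'I_n) : nat := #|[set u | e v u]|.
Definition max_deg : nat := \max_(v : 'I_n) vdeg v.
Definition min_deg : nat := \big[minn/max_deg]_(v : 'I_n) vdeg v.

Variable R : realType.

Definition adjmx : 'M[R]_n := \matrix_(i, j) (e i j)%:R.

(* Law of the random walk omega(h) with stopping probability p:
   the walk (j_1 = h, j_2, ..., j_t) has probability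
   (1-p)^(t-1) * p * prod_{s<t} 1/vdeg(j_s) if consecutive vertices are adjacent,
   and 0 otherwise. Walks are represented by nonempty sequences. *)
Definition walk_prob (p : R) (h : 'I_n) (s : seq 'I_n) : R :=
  match s with
  | [::] => 0
  | j1 :: rest =>
      if (j1 == h) && path e j1 rest then
        (1 - p) ^+ size rest * p * \prod_(j <- belast j1 rest) ((vdeg j)%:R)^-1
      else 0
  end.

(* frequency vector f^{omega,lambda}_h(i) = sum over prefix sub-walks ending at i
   of lambda^(length); the prefix (j_1..j_{r+1}) has length r. *)
Definition freq (lam : R) (s : seq 'I_n) (i : 'I_n) : R :=
  \sum_(r < size s | nth i s r == i) lam ^+ r.

Definition exp_freq (p lam : R) (h i : 'I_n) : \bar R :=
  \esum_(s in [set: seq 'I_n]) (walk_prob p h s * freq lam s i)%:E.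

Definition rw_kernel (p lam : R) (k l : 'I_n) : \bar R :=
  (\sum_(i : 'I_n) exp_freq p lam k i * exp_freq p lam l i)%E.

Definition Gamma_adj (c : R) (k l : 'I_n) : \bar R :=
  (\sum_(i <oo) (((i.+1)%:R * ((c *: adjmx) ^+ i) k l)%:E))%E.

End Graph.

From HB Require Import structures.
From mathcomp Require Import all_boot all_order all_algebra.
From mathcomp Require Import all_classical all_reals all_analysis.
From mathcomp Require Import ring.
Set Implicit Arguments. Unset Strict Implicit. Unset Printing Implicit Defensive.
Import Order.TTheory GRing.Theory Num.Theory.
Import numFieldNormedType.Exports.
Local Open Scope ring_scope.

(* Let P = D^-1 Adj be the transition matrix of the simple random walk and
   Q = rho P with rho = (1 - p) lam.  Walks with t + 1 vertices carry total
   mass p (1 - p)^t, and a first-step decomposition shows that they contribute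
   p (1 - p)^t sum_(r <= t) (lam P)^r (h, i) to E[f_h(i)].  Summing over t is
   a Cauchy product with the geometric law of the stopping time, so
   E[f_h(i)] = sum_r Q^r (h, i), and therefore
   K(k, l) = sum_r sum_s (Q^r (Q^T)^s)(k, l) = sum_m sum_(r <= m) (Q^r (Q^T)^(m-r))(k, l).
   Entrywise rho / d_max Adj <= Q, Q^T <= rho / d_min Adj, and products of powers
   of nonnegative matrices are monotone, so each of the m + 1 inner terms lies
   between (rho / d_max Adj)^m and (rho / d_min Adj)^m, which sum to the two
   Gamma series. *)

Section NonnegSeries.
Variable R : realType.
Local Open Scope ereal_scope.
Implicit Types f : nat -> \bar R.

Lemma nneseries_trunc f m : (forall r, 0 <= f r) ->
  \sum_(r <oo) (if (r <= m)%N then f r else 0) = \sum_(r < m.+1) f r.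
Proof.
move=> f0; rewrite (nneseries_split 0 m.+1); last by move=> k _; case: ifP.
rewrite add0n eseries0 ?adde0; last by move=> k; rewrite ltnNge => /negPf ->.
by rewrite big_mkord; apply: eq_bigr => r _; rewrite -ltnS ltn_ord.
Qed.

Lemma nneseries_shiftr f r : (forall k, 0 <= f k) ->
  \sum_(m <oo) (if (r <= m)%N then f (m - r)%N else 0) = \sum_(s <oo) f s.
Proof.
move=> f0; set g := fun m => if (r <= m)%N then f (m - r)%N else 0.
transitivity (\sum_(r <= m <oo) g m).
  rewrite [RHS]ereal_series [RHS]eseries_mkcond.
  by apply: eq_eseriesr => k _; rewrite /g; case: ifP.
rewrite -nneseries_addn => [|k]; last by rewrite /g; case: ifP.
by apply: eq_eseriesr => s _; rewrite /g leq_addl addnK.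
Qed.

Lemma nneseries_cauchy (b : nat -> nat -> \bar R) : (forall r s, 0 <= b r s) ->
  \sum_(r <oo) \sum_(s <oo) b r s = \sum_(m <oo) \sum_(r < m.+1) b r (m - r)%N.
Proof.
move=> b0.
transitivity (\sum_(r <oo) \sum_(m <oo) (if (r <= m)%N then b r (m - r)%N else 0)).
  by apply: eq_eseriesr => r _; rewrite nneseries_shiftr.
rewrite nneseries_interchange => [|r m]; last by case: ifP.
by apply: eq_eseriesr => m _; rewrite (nneseries_trunc (f := fun r => b r (m - r)%N)).
Qed.

Lemma ge0_nneseriesZr (a : nat -> R) (x : \bar R) :
  (forall r, 0 <= a r)%R -> 0 <= x ->
  (\sum_(r <oo) (a r)%:E) * x = \sum_(r <oo) ((a r)%:E * x).
Proof.
move=> a0 x0; have [xfin|xnfin] := boolP (x \is a fin_num).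
  rewrite -(fineK xfin) muleC -nneseriesZl => [|r _]; last by rewrite lee_fin.
  by apply: eq_eseriesr => r _; rewrite muleC.
have -> : x = +oo by move: xnfin x0; case: x => //= y; rewrite leNye.
have [[r ar]|a_eq0] := pselect (exists r, (0 < a r)%R); last first.
  have az r : a r = 0%R.
    by apply/eqP; rewrite eq_le a0 andbT leNgt; apply/negP => ?; apply: a_eq0; exists r.
  by rewrite !eseries0 ?mul0e // => k _ _; rewrite az ?mul0e.
have S0 : 0 < \sum_(r <oo) (a r)%:E.
  apply: (@lt_le_trans _ _ (a r)%:E); first by rewrite lte_fin.
  apply: le_trans (nneseries_lim_ge r.+1 _) => [|k _ _]; last by rewrite lee_fin.
  by rewrite big_nat_recr //= leeDr // sume_ge0 // => k _; rewrite lee_fin.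
rewrite gt0_muley //; apply/esym/(nneseries_pinfty (k := r)) => [k _||] //.
  by rewrite mule_ge0 // lee_fin.
by rewrite mulry /= gtr0_sg // mul1e.
Qed.

Lemma nneseries_mul (a b : nat -> R) :
  (forall r, 0 <= a r)%R -> (forall s, 0 <= b s)%R ->
  (\sum_(r <oo) (a r)%:E) * (\sum_(s <oo) (b s)%:E) =
  \sum_(r <oo) \sum_(s <oo) (a r * b s)%:E.
Proof.
move=> a0 b0; rewrite ge0_nneseriesZr //; last first.
  by apply: nneseries_ge0 => s _ _; rewrite lee_fin.
apply: eq_eseriesr => r _; rewrite -nneseriesZl => [|s _]; last by rewrite lee_fin.
by apply: eq_eseriesr => s _; rewrite EFinM.
Qed.

Lemma eseries_geometric (a z : R) : (`|z| < 1)%R ->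
  \sum_(u <oo) (a * z ^+ u)%:E = (a / (1 - z))%:E.
Proof.
move=> z1; transitivity (limn (EFin \o series (geometric a z))).
  by apply/congr_lim/funext => k /=; rewrite /series /= sumEFin.
rewrite EFin_lim; last exact: is_cvg_geometric_series.
by congr EFin; apply: cvg_lim => //; exact: cvg_geometric_series.
Qed.

End NonnegSeries.

Section SequenceSums.
Variables (R : realType) (T : choiceType).
Local Open Scope classical_set_scope.
Local Open Scope ereal_scope.

Lemma esumZl (S : set T) (f : T -> \bar R) (c : R) :
  (0 <= c)%R -> (forall x, S x -> 0 <= f x) ->
  \esum_(x in S) (c%:E * f x) = c%:E * \esum_(x in S) f x.
Proof.
move=> c0 f0.
have fsumZl A : finite_set A -> A `<=` S ->
    \sum_(x \in A) (c%:E * f x) = c%:E * \sum_(x \in A) f x.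
  move=> fA AS; rewrite !fsbig_finite //= big_seq [in RHS]big_seq.
  by rewrite ge0_sume_distrr // => x; rewrite in_fset_set // inE => /AS /f0.
rewrite /esum -ereal_supZl //; last first.
  by apply/set0P; exists 0; exists set0; [exact: fsets_set0 | rewrite fsbig_set0].
congr ereal_sup; apply/seteqP; split => x /=.
  by move=> [A [fA AS] <-]; exists (\sum_(a \in A) f a); [exists A | rewrite fsumZl].
by move=> [y [A [fA AS] <-] <-]; exists A => //; rewrite fsumZl.
Qed.

Definition seqs_of_size (t : nat) : set (seq T) := [set s | size s = t].

Lemma seqs_of_size0 : seqs_of_size 0 = [set [::]].
Proof. by apply/seteqP; split => s /=; [move/size0nil | move=> ->]. Qed.

Lemma esum_by_size (f : seq T -> \bar R) : (forall s, 0 <= f s) ->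
  \esum_(s in [set: seq T]) f s = \sum_(t <oo) \esum_(s in seqs_of_size t) f s.
Proof.
move=> f0; rewrite (_ : [set: seq T] = \bigcup_t seqs_of_size t); last first.
  by apply/seteqP; split => s // _; exists (size s).
by rewrite nneseries_sum_bigcup //; exact: trivIset_preimage1.
Qed.

Lemma esum_size_cons (f : seq T -> \bar R) h t : (forall s, 0 <= f s) ->
  (forall x s, x != h -> f (x :: s) = 0) ->
  \esum_(s in seqs_of_size t.+1) f s = \esum_(s in seqs_of_size t) f (h :: s).
Proof.
move=> f0 f_head.
have hS : cons h @` seqs_of_size t = seqs_of_size t.+1 `&` cons h @` seqs_of_size t.
  apply/seteqP; split => [_ [s st <-]|s []//].
  by split; [exact: (f_equal S st) | exists s].
rewrite (esumID (cons h @` seqs_of_size t)) // -hS esum_image // => [|s1 s2 _ _ []//].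
rewrite [X in _ + X]esum1 ?adde0 // => -[|x s] [//= [st] not_hs].
by apply: f_head; apply: contra_notN not_hs => /eqP ->; exists s.
Qed.

End SequenceSums.

Section MatrixPowers.
Variables (R : comPzRingType) (n : nat).
Implicit Types A : 'M[R]_n.

Lemma trmxX A k : (A ^+ k)^T = A^T ^+ k.
Proof.
elim: k => [|k IH]; first by rewrite !expr0 trmx1.
by rewrite exprS exprSr -!mulmxE trmx_mul IH.
Qed.

Lemma scalemxX (c : R) A k : (c *: A) ^+ k = c ^+ k *: A ^+ k.
Proof.
elim: k => [|k IH]; first by rewrite !expr0 scale1r.
by rewrite !exprS IH -!mulmxE -scalemxAl -scalemxAr scalerA.
Qed.

Lemma sum_mxX_recl A t h i : \sum_(r < t.+2) (A ^+ r) h i =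
  (h == i)%:R + \sum_j A h j * \sum_(r < t.+1) (A ^+ r) j i.
Proof.
rewrite big_ord_recl expr0 mxE; congr (_ + _).
transitivity (\sum_(r < t.+1) \sum_j A h j * (A ^+ r) j i).
  by apply: eq_bigr => r _; rewrite /= exprS -mulmxE mxE.
by rewrite exchange_big; apply: eq_bigr => j _; rewrite mulr_sumr.
Qed.

End MatrixPowers.

Section EntrywiseOrder.
Variable R : numDomainType.

Definition mxle m n (A B : 'M[R]_(m, n)) := forall i j, A i j <= B i j.

Lemma mxle_trmx m n (A B : 'M[R]_(m, n)) : mxle A B -> mxle A^T B^T.
Proof. by move=> AB i j; rewrite !mxE. Qed.

Lemma mxle0_trmx m n (A : 'M[R]_(m, n)) : mxle 0 A -> mxle 0 A^T.
Proof. by move=> A0 i j; have := A0 j i; rewrite !mxE. Qed.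

Lemma mxle0_mul m n q (A : 'M[R]_(m, n)) (C : 'M[R]_(n, q)) :
  mxle 0 A -> mxle 0 C -> mxle 0 (A *m C).
Proof.
move=> A0 C0 i j; rewrite !mxE; apply: sumr_ge0 => y _.
by have := C0 y j; have := A0 i y; rewrite !mxE; exact: mulr_ge0.
Qed.

Lemma mxle_mul m n q (A B : 'M[R]_(m, n)) (C D : 'M[R]_(n, q)) :
  mxle 0 A -> mxle 0 C -> mxle A B -> mxle C D -> mxle (A *m C) (B *m D).
Proof.
move=> A0 C0 AB CD i j; rewrite !mxE; apply: ler_sum => y _.
by have := A0 i y; have := C0 y j; rewrite !mxE => *; rewrite ler_pM.
Qed.

Lemma mxle0_exp n (A : 'M[R]_n) k : mxle 0 A -> mxle 0 (A ^+ k).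
Proof.
move=> A0; elim: k => [|k IH]; first by move=> i j; rewrite expr0 !mxE ler0n.
by rewrite exprS -mulmxE; exact: mxle0_mul.
Qed.

Lemma mxle_exp n (A B : 'M[R]_n) k : mxle 0 A -> mxle A B -> mxle (A ^+ k) (B ^+ k).
Proof.
move=> A0 AB; elim: k => [|k IH]; first by move=> i j.
by rewrite !exprS -!mulmxE; apply: mxle_mul => //; exact: mxle0_exp.
Qed.

End EntrywiseOrder.

Section CauchySeries.
Variables (R : realType) (n : nat).
Local Open Scope ereal_scope.
Implicit Types A B C D : 'M[R]_n.

Definition cauchy_series A C (k l : 'I_n) : \bar R :=
  \sum_(m <oo) (\sum_(r < m.+1) (A ^+ r *m C ^+ (m - r)) k l)%:E.

Lemma cauchy_seriesE A C k l : mxle 0 A -> mxle 0 C ->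
  cauchy_series A C k l = \sum_(r <oo) \sum_(s <oo) ((A ^+ r *m C ^+ s) k l)%:E.
Proof.
move=> A0 C0; rewrite nneseries_cauchy => [|r s]; last first.
  by have := mxle0_mul (mxle0_exp r A0) (mxle0_exp s C0) k l; rewrite mxE lee_fin.
by apply: eq_eseriesr => m _; rewrite sumEFin.
Qed.

Lemma cauchy_series_le A B C D k l : mxle 0 A -> mxle 0 C -> mxle A B -> mxle C D ->
  cauchy_series A C k l <= cauchy_series B D k l.
Proof.
move=> A0 C0 AB CD; apply: lee_nneseries => [m _ _|m _].
  rewrite lee_fin sumr_ge0 // => r _.
  by have := mxle0_mul (mxle0_exp r A0) (mxle0_exp (m - r) C0) k l; rewrite mxE.
rewrite lee_fin; apply: ler_sum => r _.
exact: mxle_mul (mxle0_exp r A0) (mxle0_exp _ C0) (mxle_exp r A0 AB) (mxle_exp _ C0 CD) k l.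
Qed.

Lemma sum_mul_powers_series A C k l : mxle 0 A -> mxle 0 C ->
  \sum_i ((\sum_(r <oo) ((A ^+ r) k i)%:E) * (\sum_(s <oo) ((C ^+ s) l i)%:E)) =
  cauchy_series A C^T k l.
Proof.
move=> A0 C0; have CT0 := mxle0_trmx C0.
have Ar0 r i j : (0 <= (A ^+ r) i j)%R by have := mxle0_exp r A0 i j; rewrite mxE.
have Cs0 s i j : (0 <= (C ^+ s) i j)%R by have := mxle0_exp s C0 i j; rewrite mxE.
rewrite cauchy_seriesE //.
under eq_bigr do rewrite nneseries_mul //.
rewrite -nneseries_sum => [|i r _]; last first.
  by apply: nneseries_ge0 => s _ _; rewrite lee_fin mulr_ge0.
apply: eq_eseriesr => r _; rewrite -nneseries_sum => [|i s _]; last by rewrite lee_fin mulr_ge0.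
apply: eq_eseriesr => s _; rewrite sumEFin -trmxX mxE.
by congr EFin; apply: eq_bigr => i _; rewrite mxE.
Qed.

End CauchySeries.

Lemma bigmin_leq (I : eqType) (r : seq I) x0 (F : I -> nat) v :
  v \in r -> (\big[minn/x0]_(y <- r) F y <= F v)%N.
Proof.
elim: r => // y r IH; rewrite inE big_cons => /predU1P[->|/IH]; first exact: geq_minl.
exact: leq_trans (geq_minr _ _).
Qed.

Section Graph.
Variables (n : nat) (e : rel 'I_n) (R : realType).
Implicit Types (h i j v : 'I_n).

Lemma vdeg_le_max v : (vdeg e v <= max_deg e)%N.
Proof. exact: leq_bigmax. Qed.

Lemma min_deg_le v : (min_deg e <= vdeg e v)%N.
Proof. by rewrite /min_deg bigmin_leq ?mem_index_enum. Qed.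

Lemma min_deg_gt0 v : (forall u, 0 < vdeg e u)%N -> (0 < min_deg e)%N.
Proof.
move=> no_isolated; rewrite /min_deg; elim/big_ind: _ => [||u _].
- exact: leq_trans (no_isolated v) (vdeg_le_max v).
- by move=> x y x0 y0; rewrite leq_min x0.
- exact: no_isolated.
Qed.

Lemma scaled_adjmx_ge0 (c : R) : 0 <= c -> mxle 0 (c *: adjmx e R).
Proof. by move=> c0 i j; rewrite !mxE mulr_ge0. Qed.

Lemma trmx_adjmx : symmetric e -> (adjmx e R)^T = adjmx e R.
Proof. by move=> e_sym; apply/matrixP => i j; rewrite !mxE e_sym. Qed.

Lemma Gamma_adjE (c : R) k l :
  Gamma_adj e c k l = cauchy_series (c *: adjmx e R) (c *: adjmx e R) k l.
Proof.
apply: eq_eseriesr => m _; congr EFin.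
transitivity (\sum_(r < m.+1) ((c *: adjmx e R) ^+ m) k l).
  by rewrite sumr_const card_ord mulr_natl.
by apply: eq_bigr => r _; rewrite mulmxE -exprD subnKC // -ltnS.
Qed.

Definition trans_mx : 'M[R]_n := \matrix_(i, j) ((e i j)%:R / (vdeg e i)%:R).

Lemma trans_mx_ge0 : mxle 0 trans_mx.
Proof. by move=> i j; rewrite !mxE divr_ge0. Qed.

Lemma trans_mx_rowsum h : (0 < vdeg e h)%N -> \sum_j trans_mx h j = 1.
Proof.
move=> h_deg; have deg_sum : (vdeg e h)%:R = \sum_j (e h j)%:R :> R.
  by rewrite /vdeg -sumr_const big_mkcond; apply: eq_bigr => j _; rewrite inE; case: (e h j).
under eq_bigr do rewrite mxE.
by rewrite -mulr_suml -deg_sum divff // pnatr_eq0 -lt0n.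
Qed.

End Graph.

Section RandomWalk.
Variables (n : nat) (e : rel 'I_n) (R : realType).
Hypothesis no_isolated : forall v : 'I_n, (0 < vdeg e v)%N.
Variables (p lam : R).
Hypotheses (p_gt0 : 0 < p) (p_lt1 : p < 1) (lam_ge0 : 0 <= lam).
Implicit Types (s : seq 'I_n) (h i j x y : 'I_n).
Local Notation W := (walk_prob e p).
Local Notation P := (trans_mx e R).

Let q_ge0 : 0 <= 1 - p. Proof. by rewrite subr_ge0 ltW. Qed.
Let P_ge0 i j : 0 <= P i j. Proof. by have := trans_mx_ge0 e R i j; rewrite mxE. Qed.

Lemma walk_prob_ge0 h s : 0 <= W h s.
Proof.
case: s => [|j1 rest] //=; case: ifP => // _.
rewrite !mulr_ge0 ?exprn_ge0 ?(ltW p_gt0) //.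
by apply: prodr_ge0 => j _; rewrite invr_ge0 ler0n.
Qed.

Lemma walk_prob1 h : W h [:: h] = p.
Proof. by rewrite /walk_prob /= eqxx expr0 big_nil mul1r mulr1. Qed.

Lemma walk_prob_cons_neq h x s : x != h -> W h (x :: s) = 0.
Proof. by rewrite /walk_prob /= => /negPf ->. Qed.

Lemma walk_prob_cons2 h y s : W h [:: h, y & s] = (1 - p) * P h y * W y (y :: s).
Proof.
rewrite /walk_prob /= !eqxx mxE.
by case: (e h y); case: (path e y s); rewrite /= ?big_cons ?exprS; ring.
Qed.

Lemma freq_ge0 s i : 0 <= freq lam s i.
Proof. by apply: sumr_ge0 => r _; rewrite exprn_ge0. Qed.

Lemma freq_cons x s i : freq lam (x :: s) i = (x == i)%:R + lam * freq lam s i.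
Proof.
rewrite /freq /= big_mkcond big_ord_recl /= expr0; congr (_ + _).
  by case: (x == i).
rewrite mulr_sumr [RHS]big_mkcond /=; apply: eq_bigr => r _.
by case: ifP; rewrite ?mulr0 // exprS.
Qed.

Lemma esum_walk_first_step (g : seq 'I_n -> R) t h : (forall s, 0 <= g s) ->
  (\esum_(s in seqs_of_size t.+2) (W h s * g s)%:E =
   \sum_y ((1 - p) * P h y)%:E *
     \esum_(s in seqs_of_size t.+1) (W y s * g (h :: s))%:E)%E.
Proof.
move=> g0; rewrite (esum_size_cons (h := h)) => [||x s xh]; first last.
- by rewrite walk_prob_cons_neq // mul0r.
- by move=> s; rewrite lee_fin mulr_ge0 ?walk_prob_ge0.
rewrite (eq_esum (b := fun s => \sum_y ((1 - p) * P h y)%:E * (W y s * g (h :: s))%:E)%E).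
  rewrite esum_sum => [|s y _ _]; last by rewrite -EFinM lee_fin !mulr_ge0 ?walk_prob_ge0.
  apply: eq_bigr => y _; rewrite esumZl ?mulr_ge0 // => s _.
  by rewrite lee_fin mulr_ge0 ?walk_prob_ge0.
move=> [//|y0 s] _; rewrite (bigD1 y0) // big1 => [|y y_neq].
  by rewrite Monoid.mulm1 walk_prob_cons2 -EFinM mulrA.
by rewrite walk_prob_cons_neq 1?eq_sym // mul0r mule0.
Qed.

Lemma esum_walk_size1 (g : seq 'I_n -> R) h : (forall s, 0 <= g s) ->
  (\esum_(s in seqs_of_size 1) (W h s * g s)%:E = (p * g [:: h])%:E)%E.
Proof.
move=> g0; rewrite (esum_size_cons (h := h)) => [||x s xh]; first last.
- by rewrite walk_prob_cons_neq // mul0r.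
- by move=> s; rewrite lee_fin mulr_ge0 ?walk_prob_ge0.
rewrite seqs_of_size0 esum_set1 ?walk_prob1 //.
by rewrite lee_fin mulr_ge0 // ltW.
Qed.

Lemma esum_walk_prob_size t h :
  (\esum_(s in seqs_of_size t.+1) (W h s)%:E = (p * (1 - p) ^+ t)%:E)%E.
Proof.
elim: t h => [|t IH] h; under eq_esum do rewrite -[W h _]mulr1.
  by rewrite (esum_walk_size1 (g := fun=> 1)) // expr0.
rewrite (esum_walk_first_step (g := fun=> 1)) //.
under eq_bigr do under eq_esum do rewrite mulr1.
under eq_bigr do rewrite IH -EFinM.
by rewrite sumEFin -mulr_suml -mulr_sumr trans_mx_rowsum // mulr1 exprS mulrCA.
Qed.

Lemma esum_walk_freq_cons t x y i :
  (\esum_(s in seqs_of_size t) (W y s * freq lam (x :: s) i)%:E =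
   ((x == i)%:R)%:E * (\esum_(s in seqs_of_size t) (W y s)%:E) +
   lam%:E * (\esum_(s in seqs_of_size t) (W y s * freq lam s i)%:E))%E.
Proof.
have Wf0 s : (0 <= (W y s * freq lam s i)%:E)%E.
  by rewrite lee_fin mulr_ge0 ?walk_prob_ge0 ?freq_ge0.
rewrite -esumZl => [||s _]; [|exact: lam_ge0|exact: Wf0].
rewrite -esumZl => [||s _]; [|exact: ler0n|by rewrite lee_fin walk_prob_ge0].
rewrite -esumD => [|s _|s _]; first last.
- by rewrite mule_ge0 ?lee_fin ?mulr_ge0 ?walk_prob_ge0 ?freq_ge0.
- by rewrite mule_ge0 ?lee_fin ?walk_prob_ge0.
by apply: eq_esum => s _; rewrite freq_cons -!EFinM -EFinD; congr EFin; ring.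
Qed.

Lemma esum_walk_freq_size t h i :
  (\esum_(s in seqs_of_size t.+1) (W h s * freq lam s i)%:E =
   (p * (1 - p) ^+ t * \sum_(r < t.+1) ((lam *: P) ^+ r) h i)%:E)%E.
Proof.
elim: t h => [|t IH] h.
  rewrite (esum_walk_size1 (g := fun s => freq lam s i)) => [|s]; last exact: freq_ge0.
  by rewrite freq_cons /freq big_ord0 big_ord1 expr0 mxE mulr0 addr0 mulr1.
rewrite (esum_walk_first_step (g := fun s => freq lam s i)) => [|s]; last exact: freq_ge0.
under eq_bigr do rewrite esum_walk_freq_cons esum_walk_prob_size IH.
rewrite sumEFin sum_mxX_recl; congr EFin.
set a := p * (1 - p) ^+ t.
transitivity ((1 - p) * a * ((h == i)%:R * \sum_y P h y +
  \sum_y (lam *: P) h y * \sum_(r < t.+1) ((lam *: P) ^+ r) y i)).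
  rewrite [in RHS]mulr_sumr -big_split mulr_sumr; apply: eq_bigr => y _.
  by rewrite [(lam *: P) h y]mxE /=; ring.
by rewrite trans_mx_rowsum // mulr1 /a exprS; ring.
Qed.

Lemma exp_freqE h i :
  exp_freq e p lam h i = (\sum_(r <oo) (((((1 - p) * lam) *: P) ^+ r) h i)%:E)%E.
Proof.
have Wf0 s : (0 <= (W h s * freq lam s i)%:E)%E.
  by rewrite lee_fin mulr_ge0 ?walk_prob_ge0 ?freq_ge0.
rewrite /exp_freq esum_by_size // nneseries_recl // => [|t _]; last first.
  by apply: esum_ge0 => s _; exact: Wf0.
rewrite seqs_of_size0 esum_set1 // (_ : W h [::] = 0) // mul0r add0e.
rewrite -nneseries_addn => [|t]; last by apply: esum_ge0 => s _; exact: Wf0.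
under eq_eseriesr => t _ do rewrite addn1 esum_walk_freq_size.
pose a r := (1 - p) ^+ r * ((lam *: P) ^+ r) h i.
pose b u := p * (1 - p) ^+ u.
have a0 r : 0 <= a r.
  have LP0 : mxle 0 (lam *: P) by move=> x y; rewrite !mxE mulr_ge0.
  by have := mxle0_exp r LP0 h i; rewrite mxE => ?; rewrite mulr_ge0 ?exprn_ge0.
have b0 u : 0 <= b u by rewrite /b mulr_ge0 ?exprn_ge0 // ltW.
transitivity (\sum_(t <oo) \sum_(r < t.+1) (a r * b (t - r)%N)%:E)%E.
  apply: eq_eseriesr => t _; rewrite sumEFin mulr_sumr; congr EFin; apply: eq_bigr => r _.
  by rewrite /a /b -{1}(subnKC (ltnSE (ltn_ord r))) exprD; ring.
rewrite -(nneseries_cauchy (b := fun r u => (a r * b u)%:E)) => [|r u]; last first.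
  by rewrite lee_fin mulr_ge0.
apply: eq_eseriesr => r _.
rewrite (eq_eseriesr (fun u _ => EFinM (a r) (b u))) nneseriesZl => [|u _]; last first.
  by rewrite lee_fin.
rewrite eseries_geometric ?ger0_norm ?ltrBlDr ?ltrDl // opprB addrC subrK divff ?gt_eqF //.
by rewrite mule1 /a !scalemxX !mxE exprMn mulrA.
Qed.

End RandomWalk.

Section Kernel.
Variables (n : nat) (e : rel 'I_n) (R : realType).
Hypotheses (e_sym : symmetric e) (no_isolated : forall v : 'I_n, (0 < vdeg e v)%N).
Variables (p lam : R).
Hypotheses (p_gt0 : 0 < p) (p_lt1 : p < 1) (lam_ge0 : 0 <= lam).
Local Notation rho := ((1 - p) * lam).
Local Notation Q := (rho *: trans_mx e R).

Let rho_ge0 : 0 <= rho. Proof. by rewrite mulr_ge0 // subr_ge0 ltW. Qed.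

Lemma walk_mx_ge0 : mxle 0 Q.
Proof. by move=> i j; have := trans_mx_ge0 e R i j; rewrite !mxE => ?; rewrite mulr_ge0. Qed.

Lemma rw_kernelE k l : rw_kernel e p lam k l = cauchy_series Q Q^T k l.
Proof.
rewrite /rw_kernel; under eq_bigr do rewrite !exp_freqE //.
exact: sum_mul_powers_series k l walk_mx_ge0 walk_mx_ge0.
Qed.

Lemma deg_ratio_bounds (c x : R) v : 0 <= c -> 0 <= x ->
  c / (max_deg e)%:R * x <= c * (x / (vdeg e v)%:R) <= c / (min_deg e)%:R * x.
Proof.
move=> c0 x0; have cx0 : 0 <= c * x by rewrite mulr_ge0.
have dv0 : 0 < (vdeg e v)%:R :> R by rewrite ltr0n.
have dmin0 : 0 < (min_deg e)%:R :> R by rewrite ltr0n (min_deg_gt0 v).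
rewrite mulrAC mulrA [c / _ * x]mulrAC.
apply/andP; split; apply: ler_wpM2l => //; rewrite lef_pV2 ?posrE ?ler_nat //.
- exact: vdeg_le_max.
- by rewrite (lt_le_trans dv0) // ler_nat vdeg_le_max.
- exact: min_deg_le.
Qed.

Local Notation cmax := (rho / (max_deg e)%:R).
Local Notation cmin := (rho / (min_deg e)%:R).

Lemma walk_mx_between_adj : mxle (cmax *: adjmx e R) Q /\ mxle Q (cmin *: adjmx e R).
Proof.
by split=> i j; have /andP[? ?] := deg_ratio_bounds i rho_ge0 (ler0n R (e i j)); rewrite !mxE.
Qed.

Lemma walk_mxT_between_adj : mxle (cmax *: adjmx e R) Q^T /\ mxle Q^T (cmin *: adjmx e R).
Proof.
have [lo up] := walk_mx_between_adj.
have symZ c : (c *: adjmx e R)^T = c *: adjmx e R by rewrite linearZ /= trmx_adjmx.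
by rewrite -(symZ cmax) -(symZ cmin); split; exact: mxle_trmx.
Qed.

End Kernel.

Theorem theorem4p2 (R : realType) (n : nat) (e : rel 'I_n)
  (e_sym : symmetric e) (e_irr : irreflexive e)
  (no_isolated : forall v : 'I_n, (0 < vdeg e v)%N)
  (lam p : R) (lam_ge0 : 0 <= lam) (lam_le1 : lam <= 1)
  (p_gt0 : 0 < p) (p_lt1 : p < 1) :
  forall k l : 'I_n,
    (Gamma_adj e ((1 - p) * lam / (max_deg e)%:R)%R k l <= rw_kernel e p lam k l)%E /\
    (rw_kernel e p lam k l <= Gamma_adj e ((1 - p) * lam / (min_deg e)%:R)%R k l)%E.
Proof.
move=> k l; have rho_ge0 : 0 <= (1 - p) * lam by rewrite mulr_ge0 // subr_ge0 ltW.
have adj_ge0 d : mxle 0 (((1 - p) * lam / d%:R) *: adjmx e R).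
  by apply: scaled_adjmx_ge0; rewrite divr_ge0.
have Q_ge0 := walk_mx_ge0 e p_lt1 lam_ge0.
have QT_ge0 := mxle0_trmx Q_ge0.
have [Q_lo Q_up] := walk_mx_between_adj no_isolated p_lt1 lam_ge0.
have [QT_lo QT_up] := walk_mxT_between_adj e_sym no_isolated p_lt1 lam_ge0.
rewrite !Gamma_adjE (rw_kernelE no_isolated p_gt0 p_lt1 lam_ge0).
by split; apply: cauchy_series_le => //; exact: adj_ge0.
Qed.
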